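(* Let $g,h>\tfrac12$ and let $\mathcal{D}=((d_1,t_1),\ldots,(d_M,t_M))$ be an ordered list of pairwise distinct seed labels, valid both for the parameters $(g,h)$ and $(h,g)$, which is mirror symmetric, i.e. $\{d_j: t_j=\mathrm{I}\}=\{d_j: t_j=\mathrm{II}\}$ as sets. Then for every $n\in\mathbb{Z}_{\ge0}$ and $-1<\eta<1$, $$P_{\mathcal{D},n}\big(-\eta;(g,h)\big)=(-1)^nP_{\mathcal{D},n}\big(\eta;(h,g)\big),\qquad \Xi_{\mathcal{D}}\big(-\eta;(g,h)\big)=\Xi_{\mathcal{D}}\big(\eta;(h,g)\big).$$
   Context: $[a]'$ denotes the greatest integer strictly less than $a$; $(a)_k=a(a+1)\cdots(a+k-1)$, $(a)_0=1$. For real $\alpha,\beta$, $m\in\mathbb{Z}_{\ge0}$, $P^{(\alpha,\beta)}_m(\eta)=\frac{1}{m!}\sum_{k=0}^m\frac{(-m)_k(m+\alpha+\beta+1)_k(\alpha+k+1)_{m-k}}{k!}\big(\frac{1-\eta}{2}\big)^k$. For parameters $(g,h)$, a seed label is a pair $(\mathrm{v},t)$, $t\in\{\mathrm{I},\mathrm{II}\}$, with $\mathrm{v}\in\{0,\ldots,[h-\frac12]'\}$ if $t=\mathrm{I}$ and $\mathrm{v}\in\{0,\ldots,[g-\frac12]'\}$ if $t=\mathrm{II}$. For $-1<\eta<1$ let $\mu_{(\mathrm{v},\mathrm{I})}(\eta;(g,h))=\big(\frac{1+\eta}{2}\big)^{\frac12-h}P^{(g-\frac12,\frac12-h)}_{\mathrm{v}}(\eta)$,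 $\mu_{(\mathrm{v},\mathrm{II})}(\eta;(g,h))=\big(\frac{1-\eta}{2}\big)^{\frac12-g}P^{(\frac12-g,h-\frac12)}_{\mathrm{v}}(\eta)$, $P_n(\eta;(g,h))=P^{(g-\frac12,h-\frac12)}_n(\eta)$, and $\mathrm{W}[f_1,\ldots,f_r](\eta)=\det\big(\frac{d^{j-1}f_k}{d\eta^{j-1}}\big)_{1\le j,k\le r}$. For an ordered list $\mathcal{D}$ of seed labels with $M_{\mathrm{I}}$ of Type I and $M_{\mathrm{II}}$ of Type II, $\Xi_{\mathcal{D}}(\eta;(g,h))=\mathrm{W}[\mu_{(d_1,t_1)},\ldots,\mu_{(d_M,t_M)}](\eta)\big(\frac{1-\eta}{2}\big)^{(M_{\mathrm{I}}+g-\frac12)M_{\mathrm{II}}}\big(\frac{1+\eta}{2}\big)^{(M_{\mathrm{II}}+h-\frac12)M_{\mathrm{I}}}$ and $P_{\mathcal{D},n}(\eta;(g,h))=\mathrm{W}[\mu_{(d_1,t_1)},\ldots,\mu_{(d_M,t_M)},P_n](\eta)\big(\frac{1-\eta}{2}\big)^{(M_{\mathrm{I}}+g+\frac12)M_{\mathrm{II}}}\big(\frac{1+\eta}{2}\big)^{(M_{\mathrm{II}}+h+\frac12)M_{\mathrm{I}}}$, with all $\mu$'s and $P_n$ at parameters $(g,h)$; these are polynomials in $\eta$. *)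

From HB Require Import structures.
From mathcomp Require Import all_boot all_order all_algebra.
From mathcomp Require Import all_classical all_reals all_analysis.
Set Implicit Arguments. Unset Strict Implicit. Unset Printing Implicit Defensive.
Import Order.TTheory GRing.Theory Num.Theory.
Local Open Scope ring_scope.

Section Defs.
Variable R : realType.

Definition poch (a : R) (k : nat) : R := \prod_(i < k) (a + i%:R).

Definition jacobiP (al be : R) (m : nat) (eta : R) : R :=
  (m`!%:R)^-1 * \sum_(k < m.+1)
     (poch (- m%:R) k * poch (m%:R + al + be + 1) k * poch (al + k%:R + 1) (m - k)
        / (k`!%:R)) * ((1 - eta) / 2) ^+ k.

Inductive seed_type := TypeI | TypeII.
Definition seed_type_eqb (a b : seed_type) : bool :=
  match a, b with TypeI, TypeI | TypeII, TypeII => true | _, _ => false end.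
Lemma seed_type_eqP : Equality.axiom seed_type_eqb.
Proof. by case; case; constructor. Qed.
HB.instance Definition _ := hasDecEq.Build seed_type seed_type_eqP.

Definition seed_label := (nat * seed_type)%type.

(* v in {0, ..., [a]'} where [a]' is the greatest integer strictly less than a;
   for a natural v this is exactly v < a *)
Definition in_range_strict (v : nat) (a : R) : Prop := v%:R < a.

Definition valid_seed (g h : R) (d : seed_label) : Prop :=
  match d.2 with
  | TypeI => in_range_strict d.1 (h - 2^-1)
  | TypeII => in_range_strict d.1 (g - 2^-1)
  end.

Definition mu (g h : R) (d : seed_label) (eta : R) : R :=
  match d.2 with
  | TypeI => powR ((1 + eta) / 2) (2^-1 - h) * jacobiP (g - 2^-1) (2^-1 - h) d.1 eta
  | TypeII => powR ((1 - eta) / 2) (2^-1 - g) * jacobiP (2^-1 - g) (h - 2^-1) d.1 eta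
  end.

Definition Pn (g h : R) (n : nat) (eta : R) : R := jacobiP (g - 2^-1) (h - 2^-1) n eta.

Definition wronskian (r : nat) (f : 'I_r -> R -> R) (eta : R) : R :=
  \det (\matrix_(j < r, k < r) (derive1n j (f k)) eta).

Definition M_I (D : seq seed_label) : nat := count (fun d => d.2 == TypeI) D.
Definition M_II (D : seq seed_label) : nat := count (fun d => d.2 == TypeII) D.

Definition Xi (D : seq seed_label) (g h : R) (eta : R) : R :=
  wronskian (fun k : 'I_(size D) => mu g h (nth (0%N, TypeI) D k)) eta
  * powR ((1 - eta) / 2) (((M_I D)%:R + g - 2^-1) * (M_II D)%:R)
  * powR ((1 + eta) / 2) (((M_II D)%:R + h - 2^-1) * (M_I D)%:R).

Definition PD (D : seq seed_label) (n : nat) (g h : R) (eta : R) : R :=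
  wronskian (fun k : 'I_(size D).+1 =>
               if (k < size D)%N then mu g h (nth (0%N, TypeI) D k) else Pn g h n) eta
  * powR ((1 - eta) / 2) (((M_I D)%:R + g + 2^-1) * (M_II D)%:R)
  * powR ((1 + eta) / 2) (((M_II D)%:R + h + 2^-1) * (M_I D)%:R).

End Defs.

(* Reflection eta -> -eta exchanges the two seed types.  The Jacobi symmetry
   P^(a,b)_m(-x) = (-1)^m P^(b,a)_m(x), which is the Pfaff transformation of the
   terminating 2F1(-m, c; a; y) and reduces to the Chu-Vandermonde identity, gives
   mu_(v,I)(-eta; (g,h)) = (-1)^v mu_(v,II)(eta; (h,g)), the same with I and II
   exchanged, and P_n(-eta; (g,h)) = (-1)^n P_n(eta; (h,g)).  In the Wronskian
   matrix at -eta the j-th derivative row acquires (-1)^j, the column of a seed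
   (v,t) acquires (-1)^v, and by mirror symmetry the columns are those for (h,g)
   permuted by the involution (v,I) <-> (v,II).  With M = 2p or 2p + 1 columns the
   row signs give (-1)^p, the involution is a product of p transpositions, and
   every v occurs twice, so only the sign (-1)^n of P_n survives.  Finally
   M_I = M_II, so the two prefactors are simply exchanged. *)

From HB Require Import structures.
From mathcomp Require Import all_boot all_order all_algebra.
From mathcomp Require Import all_classical all_reals all_analysis.
From mathcomp Require Import ring fingroup perm.
Set Implicit Arguments. Unset Strict Implicit. Unset Printing Implicit Defensive.
Import Order.TTheory GRing.Theory Num.Theory.
Local Open Scope ring_scope.

Section Pochhammer.
Variable R : realType.
Implicit Types a c w y : R.

Lemma poch0 a : poch a 0 = 1.
Proof. by rewrite /poch big_ord0. Qed.

Lemma pochSr a k : poch a k.+1 = poch a k * (a + k%:R).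
Proof. by rewrite /poch big_ord_recr. Qed.

Lemma pochS a k : poch a k.+1 = a * poch (a + 1) k.
Proof.
rewrite /poch big_ord_recl addr0; congr (_ * _); apply: eq_bigr => i _.
by rewrite lift0 -natr1 addrA (addrAC a).
Qed.

Lemma pochD a j i : poch a (j + i) = poch a j * poch (a + j%:R) i.
Proof.
elim: i => [|i IH]; first by rewrite addn0 poch0 mulr1.
by rewrite addnS !pochSr IH natrD -mulrA addrA.
Qed.

Lemma poch_rev w L : poch (w - L%:R + 1) L = (-1) ^+ L * poch (- w) L.
Proof.
elim: L w => [|L IH] w; first by rewrite !poch0 expr0 mulr1.
rewrite pochS pochSr.
have -> : w - L.+1%:R + 1 + 1 = w - L%:R + 1 by rewrite -natr1; ring.
by rewrite IH exprS -natr1; ring.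
Qed.

Lemma poch_Nnat m k : poch (- m%:R) k = (-1) ^+ k * (m ^_ k)%:R :> R.
Proof.
elim: k => [|k IH]; first by rewrite poch0 ffactn0 expr0 mulr1.
rewrite pochSr IH ffactnSr natrM exprS.
have [km|mk] := leqP k m; first by rewrite natrB //; ring.
by rewrite ffact_small // !(mul0r, mulr0).
Qed.

Lemma chu_vandermonde L a c :
  \sum_(i < L.+1) 'C(L, i)%:R * (-1) ^+ i * poch c i * poch (a + i%:R) (L - i)
  = poch (a - c) L.
Proof.
elim: L a c => [|L IH] a c.
  by rewrite big_ord1 /= subnn !poch0 bin0 expr0 !mulr1.
have pascal : \sum_(i < L.+2) 'C(L.+1, i)%:R * (-1) ^+ i * poch c i
                 * poch (a + i%:R) (L.+1 - i) =
   \sum_(i < L.+2) 'C(L, i)%:R * (-1) ^+ i * poch c i * poch (a + i%:R) (L.+1 - i)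
 + \sum_(i < L.+1) 'C(L, i)%:R * (-1) ^+ i.+1 * poch c i.+1
     * poch (a + i.+1%:R) (L.+1 - i.+1).
  rewrite big_ord_recl [X in _ = X + _]big_ord_recl -addrA /= !bin0; congr (_ + _).
  rewrite -big_split; apply: eq_bigr => i _.
  by rewrite (_ : bump 0 i = i.+1) // binS natrD !mulrDl.
have lower : \sum_(i < L.+2) 'C(L, i)%:R * (-1) ^+ i * poch c i
               * poch (a + i%:R) (L.+1 - i) = (a + L%:R) * poch (a - c) L.
  rewrite -IH big_ord_recr /= bin_small // !mul0r addr0 mulr_sumr.
  apply: eq_bigr => i _; have iL : (i <= L)%N by rewrite -ltnS.
  by rewrite subSn // pochSr -addrA -natrD subnKC //; ring.
have upper : \sum_(i < L.+1) 'C(L, i)%:R * (-1) ^+ i.+1 * poch c i.+1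
               * poch (a + i.+1%:R) (L.+1 - i.+1) = - c * poch (a - c) L.
  rewrite (_ : a - c = a + 1 - (c + 1)); last by ring.
  rewrite -IH mulr_sumr; apply: eq_bigr => i _.
  by rewrite subSS pochS exprS -natr1 (addrC i%:R) addrA; ring.
by rewrite pascal lower upper pochSr; ring.
Qed.

End Pochhammer.

Lemma bin_trinomial N j i : (j + i <= N)%N ->
  ('C(N, j + i) * 'C(j + i, j) = 'C(N, j) * 'C(N - j, i))%N.
Proof.
move=> jiN; have jN : (j <= N)%N := leq_trans (leq_addr i j) jiN.
have iNj : (i <= N - j)%N by rewrite leq_subRL.
have fact_ji := bin_fact (leq_addr i j); rewrite addKn in fact_ji.
have fact_N := bin_fact jiN; rewrite subnDA in fact_N.
have pos : (0 < j`! * i`! * (N - j - i)`!)%N by rewrite !muln_gt0 !fact_gt0.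
apply/eqP; rewrite -(eqn_pmul2r pos); apply/eqP.
rewrite (_ : _ * _ * _ = 'C(N, j + i) * ('C(j + i, j) * (j`! * i`!)) * (N - j - i)`!)%N;
  last by ring.
rewrite fact_ji -mulnA fact_N -(bin_fact jN) -(bin_fact iNj).
by ring.
Qed.

Section Pfaff.
Variable R : realType.
Implicit Types a c y : R.

Lemma expr1Bn_widen y k N : (k <= N)%N ->
  (1 - y) ^+ k = \sum_(j < N.+1) 'C(k, j)%:R * (- y) ^+ j.
Proof.
move=> kN; rewrite exprDn.
rewrite (big_ord_widen N.+1 (fun j => 1 ^+ (k - j) * (- y) ^+ j *+ 'C(k, j))) //.
rewrite big_mkcond; apply: eq_bigr => j _.
case: ifP => jk; first by rewrite expr1n mul1r mulr_natl.
by rewrite bin_small ?mul0r // ltnNge -ltnS jk.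
Qed.

Lemma big_ord_drop (F : nat -> R) j N : (j <= N)%N ->
  (forall k, (k < j)%N -> F k = 0) ->
  \sum_(k < N.+1) F k = \sum_(i < (N - j).+1) F (j + i)%N.
Proof.
move=> jN F0; rewrite -!(big_mkord xpredT) (big_cat_nat (n := j)) //=; last exact: leqW.
rewrite big1_seq ?add0r; last by move=> k /andP[_]; rewrite mem_index_iota => /andP[_ /F0].
by rewrite -{1}[j]add0n big_addn subSn // big_mkord; apply: eq_bigr => i _; rewrite addnC.
Qed.

(* [hyp2F1 N a c y] is (a)_N * 2F1(-N, c; a; y), cleared of denominators. *)
Definition hyp2F1 N a c y : R := \sum_(k < N.+1)
  ('C(N, k)%:R * (-1) ^+ k * poch c k * poch (a + k%:R) (N - k)) * y ^+ k.

Lemma hyp2F1_coef_1B N a c j : (j <= N)%N ->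
  \sum_(k < N.+1) 'C(N, k)%:R * (-1) ^+ k * poch c k * poch (a + k%:R) (N - k) * 'C(k, j)%:R
  = 'C(N, j)%:R * (-1) ^+ N * poch c j * poch (c - a - N%:R + 1 + j%:R) (N - j).
Proof.
move=> jN; pose F k := 'C(N, k)%:R * (-1) ^+ k * poch c k * poch (a + k%:R) (N - k) * 'C(k, j)%:R.
rewrite (big_ord_drop (F := F) jN); last by move=> k kj; rewrite /F (bin_small kj) mulr0.
rewrite /F (eq_bigr (fun i : 'I_(N - j).+1 => ('C(N, j)%:R * (-1) ^+ j * poch c j) *
   ('C(N - j, i)%:R * (-1) ^+ i * poch (c + j%:R) i * poch (a + j%:R + i%:R) (N - j - i))));
  last first.
  move=> i _; have jiN : (j + i <= N)%N by rewrite -leq_subRL // -ltnS.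
  have := congr1 (fun n => n%:R : R) (bin_trinomial jiN); rewrite !natrM => trin.
  rewrite exprD pochD subnDA natrD addrA [LHS]mulrC !mulrA (mulrC 'C(j + i, j)%:R) trin.
  by ring.
rewrite -mulr_sumr chu_vandermonde (_ : a + j%:R - (c + j%:R) = a - c); last by ring.
rewrite (_ : c - a - N%:R + 1 + j%:R = (c - a) - (N - j)%:R + 1); last by rewrite natrB //; ring.
rewrite poch_rev opprB (_ : (-1) ^+ N = (-1) ^+ j * (-1) ^+ (N - j) :> R);
  last by rewrite -exprD subnKC.
have sign2 : (-1) ^+ (N - j) * (-1) ^+ (N - j) = 1 :> R by rewrite -expr2 sqrr_sign.
by rewrite -[LHS]mulr1 -[X in _ * X = _]sign2; ring.
Qed.

Lemma hyp2F1_pfaff N a c y :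
  hyp2F1 N a c (1 - y) = (-1) ^+ N * hyp2F1 N (c - a - N%:R + 1) c y.
Proof.
rewrite /hyp2F1.
under eq_bigr => k _.
  rewrite (expr1Bn_widen _ (_ : (k <= N)%N)); last by rewrite -ltnS.
  rewrite mulr_sumr; over.
rewrite exchange_big mulr_sumr; apply: eq_bigr => j _.
under eq_bigr do rewrite mulrA.
rewrite -mulr_suml hyp2F1_coef_1B; last by rewrite -ltnS.
by rewrite (exprNn y); ring.
Qed.

Lemma jacobiP_hyp2F1 a b m x : jacobiP a b m x =
  (m`!%:R)^-1 * hyp2F1 m (a + 1) (m%:R + a + b + 1) ((1 - x) / 2).
Proof.
rewrite /jacobiP /hyp2F1; congr (_ * _); apply: eq_bigr => k _.
rewrite poch_Nnat -bin_ffact natrM (_ : a + k%:R + 1 = a + 1 + k%:R); last by ring.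
have kfact : (k`!%:R : R) != 0 by rewrite pnatr_eq0 -lt0n fact_gt0.
by field.
Qed.

Lemma jacobiPN a b m x : jacobiP a b m (- x) = (-1) ^+ m * jacobiP b a m x.
Proof.
rewrite !jacobiP_hyp2F1.
have -> : (1 - - x) / 2 = 1 - (1 - x) / 2 :> R.
  have two : (2 : R) != 0 by rewrite pnatr_eq0.
  by field.
rewrite hyp2F1_pfaff.
have -> : m%:R + a + b + 1 - (a + 1) - m%:R + 1 = b + 1 by ring.
have -> : m%:R + a + b + 1 = m%:R + b + a + 1 by ring.
by rewrite mulrCA.
Qed.

End Pfaff.

Section ReflectedDerivatives.
Variable R : realType.
Local Open Scope classical_set_scope.

(* No convergence hypothesis: if [q @ F] diverges, both limits are the default
   value [0].  Hence the derivative identities below need no differentiability. *)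
Lemma limN_any (T : Type) (F : set_system T) {FF : ProperFilter F}
  (q : T -> (R : normedModType R)) :
  lim ((fun t => - q t) @ F) = - lim (q @ F).
Proof.
have [cq|dq] := pselect (cvg (q @ F)); first by rewrite limN.
rewrite (dvgP dq) dvgP; first exact/esym/oppr0.
by move=> cNq; apply: dq; rewrite -[q]opprK; apply: cvgP (cvgN cNq).
Qed.

Lemma opp_dnbhs0 : (fun x : R => - x) @ 0^' = 0^'.
Proof.
apply/seteqP; split => A /= /nbhs_ballP[e e0 Ae]; apply/nbhs_ballP; exists e => // y By y0.
  have := Ae (- y); rewrite /= opprK; apply; last by rewrite oppr_eq0.
  by move: By; rewrite -!ball_normE /= !sub0r !normrN.
apply: Ae; last by rewrite oppr_eq0.
by move: By; rewrite -!ball_normE /= !sub0r !normrN.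
Qed.

Lemma derive1_opp (f : R -> R) :
  derive1 (fun x => - f x) = fun x => - derive1 f x.
Proof.
apply/funext => a; rewrite /derive1 -limN_any; do 2 f_equal.
by apply/funext => h; rewrite -scalerN opprD opprK addrC.
Qed.

Lemma derive1_comp_opp (f : R -> R) :
  derive1 (fun x => f (- x)) = fun x => - derive1 f (- x).
Proof.
apply/funext => a; rewrite /derive1 -limN_any.
set q := fun h : R => h^-1 *: (f (h + - a) - f (- a)).
rewrite (_ : (fun h => _) = (fun h => - q (- h))); last first.
  by apply/funext => h; rewrite /q invrN scaleNr opprK opprD.
by rewrite -[in RHS]opp_dnbhs0.
Qed.

Lemma derive1n_opp j (f : R -> R) :
  derive1n j (fun x => - f x) = fun x => - derive1n j f x.
Proof. by elim: j => //= j ->; rewrite derive1_opp. Qed.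

Lemma derive1n_signr j e (f : R -> R) :
  derive1n j (fun x => (-1) ^+ e * f x) = fun x => (-1) ^+ e * derive1n j f x.
Proof.
rewrite -signr_odd; case: (odd e); last first.
  by under eq_fun do rewrite mul1r; apply/funext => x; rewrite mul1r.
under eq_fun do rewrite mulN1r; rewrite (derive1n_opp j f).
by apply/funext => x; rewrite mulN1r.
Qed.

Lemma derive1n_comp_opp j (f : R -> R) :
  derive1n j (fun x => f (- x)) = fun x => (-1) ^+ j * derive1n j f (- x).
Proof.
elim: j => [|j IH]; first by apply/funext => x; rewrite mul1r.
rewrite [LHS]/= IH.
have /= -> := derive1n_signr 1 j (fun x => derive1n j f (- x)).
rewrite derive1_comp_opp; apply/funext => x /=.
by rewrite exprS mulN1r mulrN mulNr.
Qed.

End ReflectedDerivatives.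

(* Row [j] picks up [(-1)^j] from the chain rule; these signs multiply to
   [(-1)^'C(M, 2)]. *)
Lemma wronskian_reflect (R : realType) M (F G : 'I_M -> R -> R) (s : 'S_M)
    (e : 'I_M -> nat) eta :
  (forall k, F k = fun x => (-1) ^+ e k * G (s k) (- x)) ->
  wronskian F (- eta) =
    (-1) ^+ 'C(M, 2) * (-1) ^+ s * \prod_k (-1) ^+ e k * wronskian G eta.
Proof.
move=> FG; rewrite /wronskian.
set B := \matrix_(j < M, k < M) derive1n j (G k) eta.
have -> : \matrix_(j < M, k < M) derive1n j (F k) (- eta) =
    diag_mx (\row_(j < M) (-1) ^+ j) *m (col_perm s B *m diag_mx (\row_k (-1) ^+ e k)).
  apply/matrixP => j k; rewrite mul_diag_mx mul_mx_diag !mxE FG.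
  by rewrite derive1n_signr derive1n_comp_opp opprK mulrCA (mulrC ((-1) ^+ e k)).
rewrite !det_mulmx !det_diag col_permE det_mulmx det_perm odd_permV.
have -> : \prod_(j < M) (\row_(j < M) (-1) ^+ j : 'rV[R]_M) 0 j = (-1) ^+ 'C(M, 2).
  under eq_bigr do rewrite mxE.
  by rewrite prodrXr -bin2_sum big_mkord.
have -> : \prod_(k < M) (\row_k (-1) ^+ e k : 'rV[R]_M) 0 k = \prod_k (-1) ^+ e k.
  by apply: eq_bigr => k _; rewrite mxE.
by rewrite (mulrC (\det B)) -(mulrA _ (\det B)) (mulrC (\det B)) !mulrA.
Qed.

Definition mirror (d : seed_label) : seed_label :=
  (d.1, if d.2 is TypeI then TypeII else TypeI).

Lemma mirrorK : involutive mirror. Proof. by case=> v []. Qed.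
Lemma mirror_neq d : mirror d != d.
Proof. by case: d => v []; rewrite xpair_eqE andbF. Qed.

Lemma mu_reflect (R : realType) (g h : R) d :
  mu g h d = fun x => (-1) ^+ d.1 * mu h g (mirror d) (- x).
Proof.
by apply/funext => x; case: d => v []; rewrite /mu /= ?opprK jacobiPN [RHS]mulrCA signrMK.
Qed.

Lemma Pn_reflect (R : realType) (g h : R) n :
  Pn g h n = fun x => (-1) ^+ n * Pn h g n (- x).
Proof. by apply/funext => x; rewrite /Pn jacobiPN signrMK. Qed.

Section InvolutionParity.
Variable T : finType.
Implicit Type s : {perm T}.

Lemma tperm_mul_involutive s x :
  (s * s = 1)%g -> (tperm x (s x) * s * (tperm x (s x) * s) = 1)%g.
Proof.
move=> ss; have sV : s^-1%g = s by rewrite -[LHS]mulg1 -ss mulKg.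
have sts : (s * tperm x (s x) * s = tperm x (s x))%g.
  have := tpermJ x (s x) s; rewrite /conjg sV -permM ss perm1 mulgA => ->; exact: tpermC.
by rewrite -!mulgA (mulgA s) sts tperm2.
Qed.

Lemma card_moved_tperm_mul s x : (s * s = 1)%g -> s x != x ->
  #|[pred z | s z != z]| = #|[pred z | (tperm x (s x) * s)%g z != z]|.+2.
Proof.
move=> ss sx; have sK z : s (s z) = z by rewrite -permM ss perm1.
set y := s x; have xy : x != y by rewrite eq_sym.
have sy : s y = x by rewrite /y sK.
rewrite (cardD1 x) (cardD1 y) !inE sx /= sy xy add1n add1n; congr _.+2.
apply: eq_card => z; rewrite !inE permM.
have [->|zx] := eqVneq z x; first by rewrite tpermL sy eqxx andbF.
have [->|zy] := eqVneq z y; first by rewrite tpermR eqxx.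
by rewrite tpermD // eq_sym.
Qed.

Lemma odd_perm_involutive s : (s * s = 1)%g ->
  odd_perm s = odd #|[pred z | s z != z]|./2.
Proof.
have [n] := ubnP #|[pred z | s z != z]|; elim: n s => // n IH s /ltnSE moved_n ss.
have [x sx|s_id] := pickP (fun x => s x != x); last first.
  have -> : s = 1%g by apply/permP => x; apply/eqP; rewrite perm1 -[_ == _]negbK s_id.
  by rewrite odd_perm1 eq_card0 // => x; rewrite !inE perm1 eqxx.
have tt := tperm_mul_involutive x ss.
have moved_st := card_moved_tperm_mul ss sx.
set t := (tperm x (s x) * s)%g in tt moved_st *.
have sE : s = (tperm x (s x) * t)%g by rewrite /t mulgA tperm2 mul1g.
rewrite {1}sE odd_mul_tperm eq_sym sx IH //; last first.
  by apply: leq_trans moved_n; rewrite moved_st leqnSn.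
by rewrite moved_st /=; case: (odd _).
Qed.

End InvolutionParity.

Lemma odd_bin2 n : odd 'C(n, 2) = odd n./2.
Proof.
by elim: n => // n IH; rewrite binS bin1 oddD IH -uphalfE uphalf_half oddD oddb addbC.
Qed.

Local Notation d0 := (0%N, TypeI).

Section MirrorSymmetric.
Variable D : seq seed_label.
Hypotheses (D_uniq : uniq D) (D_mirror : forall d, d \in D -> mirror d \in D).

Lemma perm_eq_mirror : perm_eq D (map mirror D).
Proof.
apply: uniq_perm => //; first by rewrite (map_inj_uniq (inv_inj mirrorK)).
move=> d; rewrite -{2}(mirrorK d) (mem_map (inv_inj mirrorK)).
by apply/idP/idP => [/D_mirror|/D_mirror]; rewrite ?mirrorK.
Qed.

Lemma M_I_mirror : M_I D = M_II D.
Proof.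
rewrite /M_I /M_II (seq.permP perm_eq_mirror) count_map.
by apply: eq_count => -[v []].
Qed.

Lemma size_mirror : size D = (M_I D).*2.
Proof.
rewrite -addnn {2}M_I_mirror -(count_predC (fun d : seed_label => d.2 == TypeI)).
by congr addn; apply: eq_count => -[v []].
Qed.

Lemma prod_sign_mirror (R : comRingType) :
  \prod_(k < size D) (-1) ^+ (nth d0 D k).1 = 1 :> R.
Proof.
rewrite -(big_mkord xpredT (fun k => (-1) ^+ (nth d0 D k).1)).
rewrite -(big_nth d0 xpredT (fun d : seed_label => (-1) ^+ d.1)).
rewrite (bigID (fun d : seed_label => d.2 == TypeI)) /=.
rewrite [X in _ * X](perm_big _ perm_eq_mirror) big_map /=.
rewrite [X in _ * X](eq_bigl (fun d : seed_label => d.2 == TypeI)); last by case=> v [].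
by rewrite -big_split big1 // => d _; rewrite /= -expr2 sqrr_sign.
Qed.

Variables (N : nat) (D_le_N : (size D <= N)%N).

Definition mirror_index (k : 'I_N) : 'I_N :=
  if (k < size D)%N then insubd k (index (mirror (nth d0 D k)) D) else k.

Lemma mirror_index_lt (k : 'I_N) : (k < size D)%N ->
  (mirror_index k < size D)%N /\ nth d0 D (mirror_index k) = mirror (nth d0 D k).
Proof.
move=> kD; have mir_in : mirror (nth d0 D k) \in D by apply: D_mirror; rewrite mem_nth.
have idx_lt : (index (mirror (nth d0 D k)) D < size D)%N by rewrite index_mem.
have -> : val (mirror_index k) = index (mirror (nth d0 D k)) D.
  by rewrite /mirror_index kD val_insubd (leq_trans idx_lt D_le_N).
by rewrite nth_index.
Qed.

Lemma mirror_index_ge (k : 'I_N) : ~~ (k < size D)%N -> mirror_index k = k.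
Proof. by rewrite /mirror_index => /negbTE ->. Qed.

Lemma mirror_indexK : involutive mirror_index.
Proof.
move=> k; have [kD|Dk] := ltnP k (size D); last by rewrite !mirror_index_ge // -leqNgt.
have [mkD mkE] := mirror_index_lt kD; have [mmkD mmkE] := mirror_index_lt mkD.
by apply/val_inj/eqP; rewrite -(nth_uniq d0 mmkD kD D_uniq) mmkE mkE mirrorK.
Qed.

Definition mirror_perm : 'S_N := perm (inv_inj mirror_indexK).

Lemma mirror_permE : mirror_perm =1 mirror_index.
Proof. exact: permE. Qed.

Lemma mirror_index_moved (k : 'I_N) : (mirror_index k != k) = (k < size D)%N.
Proof.
have [kD|Dk] := ltnP k (size D); last by rewrite mirror_index_ge -?leqNgt // eqxx.
have [_ mkE] := mirror_index_lt kD; apply/eqP => kk.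
by move: (mirror_neq (nth d0 D k)); rewrite -mkE kk eqxx.
Qed.

Lemma odd_mirror_perm : odd_perm mirror_perm = odd (size D)./2.
Proof.
rewrite odd_perm_involutive; last first.
  by apply/permP => k; rewrite permM !mirror_permE mirror_indexK perm1.
congr (odd _./2); rewrite -[RHS](card_ord (size D)).
have widen_inj : injective (widen_ord D_le_N) by move=> i j /(congr1 val) /= /val_inj.
rewrite -(card_imset _ widen_inj); apply: eq_card => k.
rewrite !inE mirror_permE mirror_index_moved.
apply/idP/imsetP => [kD|[i _ ->]]; last exact: (ltn_ord i).
by exists (Ordinal kD) => //; apply: val_inj.
Qed.

Lemma mirror_sign (R : ringType) : (N <= (size D).+1)%N ->
  (-1) ^+ 'C(N, 2) * (-1) ^+ mirror_perm = 1 :> R.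
Proof.
move=> N_le; have N_half : N./2 = (size D)./2.
  move: D_le_N N_le; rewrite size_mirror half_double; set p := M_I D => pN Np.
  have [<-|pN'] := eqVneq p.*2 N; first by rewrite half_double.
  have -> : N = p.*2.+1 by apply/eqP; rewrite eqn_leq Np ltn_neqAle pN' pN.
  by rewrite /= uphalf_double.
by rewrite -[X in X * _]signr_odd odd_bin2 odd_mirror_perm N_half -signr_addb addbb.
Qed.

Lemma mirror_perm_lt (k : 'I_N) : (k < size D)%N -> (mirror_perm k < size D)%N.
Proof. by move=> kD; rewrite mirror_permE; case: (mirror_index_lt kD). Qed.

Lemma mu_nth_reflect (R : realType) (g h : R) (k : 'I_N) : (k < size D)%N ->
  mu g h (nth d0 D k) =
    fun x => (-1) ^+ (nth d0 D k).1 * mu h g (nth d0 D (mirror_perm k)) (- x).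
Proof.
by move=> kD; rewrite mirror_permE; have [_ ->] := mirror_index_lt kD; exact: mu_reflect.
Qed.

End MirrorSymmetric.

Theorem mainTheorem7 (R : realType) (g h : R) (D : seq (seed_label))
  (hg : 2^-1 < g) (hh : 2^-1 < h)
  (hdist : uniq D)
  (hvalid : forall d, d \in D -> valid_seed g h d /\ valid_seed h g d)
  (hmirror : forall v : nat, ((v, TypeI) \in D) = ((v, TypeII) \in D)) :
  forall (n : nat) (eta : R), -1 < eta < 1 ->
    PD D n g h (- eta) = (-1) ^+ n * PD D n h g eta /\
    Xi D g h (- eta) = Xi D h g eta.
Proof.
move=> n eta _.
have D_mirror d : d \in D -> mirror d \in D by case: d => v [] /=; rewrite hmirror.
have M_I_II := M_I_mirror hdist D_mirror.
have prod_sign := prod_sign_mirror hdist D_mirror R.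
split.
- have D_le_N : (size D <= (size D).+1)%N := leqnSn _.
  rewrite /PD (wronskian_reflect (s := mirror_perm hdist D_mirror D_le_N)
    (G := fun k => if (k < size D)%N then mu h g (nth d0 D k) else Pn h g n)
    (e := fun k : 'I_(size D).+1 => if (k < size D)%N then (nth d0 D k).1 else n)); last first.
    move=> k; case: ifP => kD; first by rewrite mirror_perm_lt //; exact: mu_nth_reflect.
    by rewrite mirror_permE mirror_index_ge ?kD //; exact: Pn_reflect.
  rewrite mirror_sign // mul1r big_ord_recr /= ltnn.
  under eq_bigr do rewrite ltn_ord.
  by rewrite prod_sign mul1r opprK M_I_II; ring.
- rewrite /Xi (wronskian_reflect (s := mirror_perm hdist D_mirror (leqnn _))
    (G := fun k : 'I_(size D) => mu h g (nth d0 D k))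
    (e := fun k : 'I_(size D) => (nth d0 D k).1)); last first.
    by move=> k; exact: mu_nth_reflect.
  by rewrite mirror_sign // mul1r prod_sign mul1r opprK M_I_II; ring.
Qed.
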